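(* Let $n$ be a natural number and $s$ a negative integer with $n+s>0$, and let $\Delta$ be a divisible design graph with parameters $(V,K,\lambda_1,\lambda_2;m,n)$, where $m=\frac{(-s)(n-1)}{n+s}$, $V=\frac{n(-s)(n-1)}{n+s}$, $K=(-s)(n-1)$, $\lambda_1=(-s)(n+s-1)$, $\lambda_2=\frac{(-s)(n-1)(n+s)}{n}$. Let $P_1,\dots,P_m$ be its canonical classes. Then for all $i,j\in\{1,\dots,m\}$ (including $i=j$), every vertex of $P_i$ has exactly $n+s$ neighbours in $P_j$; i.e., the quotient matrix of the canonical partition is $(n+s)J$, where $J$ is the $m\times m$ all-ones matrix.
   Context: A $K$-regular graph on $V$ vertices, neither complete nor edgeless, is a divisible design graph with parameters $(V,K,\lambda_1,\lambda_2;m,n)$ if its vertex set can be partitioned into $m$ classes (canonical classes) of size $n$ such that any two distinct vertices in the same class have exactly $\lambda_1$ common neighbours and any two vertices in different classes have exactly $\lambda_2$ common neighbours. The quotient matrix of the canonical partition is the $m\times m$ matrix $R=(r_{ij})$ where $r_{ij}$ is the number of neighbours in $P_j$ of a vertex of $P_i$ (this number is known to be independent of the chosen vertex of $P_i$). *)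

From mathcomp Require Import all_boot all_order all_algebra.
Set Implicit Arguments. Unset Strict Implicit. Unset Printing Implicit Defensive.

(* The canonical partition into m classes is
   given by a class map P : T -> 'I_m (class P_i = preimage of i). *)

Definition neighbours (T : finType) (adj : rel T) (x : T) : {set T} :=
  [set y | adj x y].

Definition common_neighbours (T : finType) (adj : rel T) (x y : T) : {set T} :=
  [set z | adj x z && adj y z].

Definition is_ddg (T : finType) (adj : rel T) (V K l1 l2 m n : nat)
    (P : T -> 'I_m) : Prop :=
  (forall x y, adj x y = adj y x) /\
      (forall x, ~~ adj x x) /\
      #|T| = V /\
      (forall x, #|neighbours adj x| = K) /\
      (exists x y, x != y /\ ~~ adj x y) /\
      (exists x y, adj x y) /\
      (forall i : 'I_m, #|[set x | P x == i]| = n) /\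
      (forall x y, x != y -> P x = P y -> #|common_neighbours adj x y| = l1) /\
      (forall x y, P x != P y -> #|common_neighbours adj x y| = l2).

From mathcomp Require Import all_boot all_order all_algebra.
From mathcomp Require Import ring zify.
Set Implicit Arguments. Unset Strict Implicit. Unset Printing Implicit Defensive.
Import GRing.Theory Num.Theory.
Local Open Scope ring_scope.

(* Fix a canonical class C = P_j of size n and let
   d(z) = |N(z) ∩ C| be the number of neighbours of a vertex z in C; we must
   show d is constant, equal to r := n + s.
   - Double counting in a symmetric graph gives
       Σ_z d(z) = Σ_{y ∈ C} deg y,
       Σ_z adj(x,z) d(z) = Σ_{y ∈ C} |N(x) ∩ N(y)|,
       Σ_z d(z)^2 = Σ_{y ∈ C} Σ_z adj(y,z) d(z).
   - In a divisible design graph, Σ_{y ∈ C} |N(x) ∩ N(y)| is K + (n-1)λ1 when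
     x ∈ C and nλ2 otherwise; for the given parameters both equal rK, and
     moreover rV = nK.
   - Hence Σ d = nK and Σ d^2 = nrK, so Σ_z (d(z) - r)^2 = nrK - 2rnK + Vr^2
     = 0, which forces d(z) = r for every vertex z. *)

Section Counting.
Variables (T : finType) (adj : rel T).
Hypothesis adj_sym : symmetric adj.

Definition deg_in (C : {set T}) (x : T) : nat := #|[set y in C | adj x y]|.

Lemma card_set_sum (p : pred T) : #|[set z | p z]| = (\sum_z p z)%N.
Proof.
rewrite -sum1_card big_mkcond; apply: eq_bigr => z _.
by rewrite inE; case: (p z).
Qed.

Lemma deg_inE (C : {set T}) (x : T) : deg_in C x = (\sum_(y in C) adj x y)%N.
Proof.
rewrite /deg_in card_set_sum [RHS]big_mkcond; apply: eq_bigr => y _.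
by case: (y \in C).
Qed.

Lemma sum_deg_in (C : {set T}) :
  (\sum_z deg_in C z)%N = (\sum_(y in C) #|neighbours adj y|)%N.
Proof.
under eq_bigr do rewrite deg_inE.
rewrite exchange_big; apply: eq_bigr => y _.
by rewrite /neighbours card_set_sum; apply: eq_bigr => z _; rewrite adj_sym.
Qed.

Lemma sum_adj_deg_in (C : {set T}) (x : T) :
  (\sum_z adj x z * deg_in C z)%N =
  (\sum_(y in C) #|common_neighbours adj x y|)%N.
Proof.
under eq_bigr => z _ do rewrite deg_inE (@big_distrr nat).
rewrite exchange_big; apply: eq_bigr => y _.
rewrite /common_neighbours card_set_sum; apply: eq_bigr => z _.
by rewrite (adj_sym z y); case: (adj x z); case: (adj y z).
Qed.

Lemma sum_sq_deg_in (C : {set T}) :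
  (\sum_z deg_in C z ^ 2)%N = (\sum_(y in C) \sum_z adj y z * deg_in C z)%N.
Proof.
under eq_bigr => z _ do rewrite -mulnn {1}deg_inE big_distrl.
rewrite exchange_big; apply: eq_bigr => y _; apply: eq_bigr => z _.
by rewrite adj_sym.
Qed.

End Counting.

(* Zero variance: if Σ F^2 - 2c Σ F + |T| c^2 = 0, i.e. Σ (F z - c)^2 = 0,
   then F is constantly equal to c. *)
Lemma constant_of_second_moment (T : finType) (F : T -> nat) (c : nat) :
  (\sum_z F z ^ 2 + #|T| * c ^ 2 = 2 * c * \sum_z F z)%N -> forall z, F z = c.
Proof.
move=> moments z.
have deviation0 : \sum_z ((F z)%:R - c%:R) ^+ 2 = 0 :> int.
  rewrite -[#|T|]sum1_card big_distrl -big_split big_distrr /= in moments.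
  transitivity ((\sum_y (F y ^ 2 + 1 * c ^ 2))%N%:R
                - (\sum_y 2 * c * F y)%N%:R : int).
    rewrite !natr_sum -sumrB; apply: eq_bigr => y _.
    by rewrite natrD !natrM; ring.
  by rewrite moments subrr.
have /eqP := psumr_eq0P (fun z _ => sqr_ge0 ((F z)%:R - c%:R : int))
  deviation0 (i := z) isT.
by rewrite sqrf_eq0 subr_eq0 eqr_nat => /eqP.
Qed.

Definition canonical_class {T : finType} {m : nat} (P : T -> 'I_m) (j : 'I_m)
    : {set T} :=
  [set y | P y == j].

(* In a divisible design graph, the common neighbours of x with the vertices of
   a canonical class add up to K + (n-1)λ1 if x lies in that class (x itself
   contributes its degree), and to nλ2 otherwise. *)
Lemma ddg_class_common_sum (T : finType) (adj : rel T) (V K l1 l2 m n : nat)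
    (P : T -> 'I_m) :
  is_ddg adj V K l1 l2 n P -> forall (x : T) (j : 'I_m),
  (\sum_(y in canonical_class P j) #|common_neighbours adj x y|)%N =
    if P x == j then (K + (n - 1) * l1)%N else (n * l2)%N.
Proof.
move=> [_ [_ [_ [degK [_ [_ [class_n [cn_same cn_diff]]]]]]]] x j.
have card_class : #|canonical_class P j| = n by rewrite -(class_n j).
case: eqP => [Pxj | Pxnj].
- have x_in : x \in canonical_class P j by rewrite inE Pxj.
  rewrite (bigD1 x) //=.
  have -> : #|common_neighbours adj x x| = K.
    by rewrite -(degK x); apply: eq_card => z; rewrite !inE andbb.
  rewrite (eq_bigr (fun=> l1)); last first.
    move=> y /andP [y_in y_x]; apply: cn_same; first by rewrite eq_sym.
    by move: y_in; rewrite inE Pxj => /eqP.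
  rewrite sum_nat_const -card_class (cardD1 x (canonical_class P j)) x_in.
  rewrite add1n subn1 /=; congr (_ + _ * _)%N.
  by apply: eq_card => y; rewrite [RHS]inE unfold_in /= inE andbC.
- rewrite (eq_bigr (fun=> l2)) ?sum_nat_const ?card_class // => y.
  by rewrite inE => /eqP Pyj; apply: cn_diff; rewrite Pyj; apply/eqP.
Qed.

Lemma ddg_parameter_identities (n : nat) (s : int) (V K l1 l2 : nat) :
  s < 0 -> 0 < n%:Z + s ->
  (V%:R : rat) = (n%:R * (- s)%:~R * (n%:R - 1)) / (n%:R + s%:~R) ->
  (K%:R : rat) = (- s)%:~R * (n%:R - 1) ->
  (l1%:R : rat) = (- s)%:~R * (n%:R + s%:~R - 1) ->
  (l2%:R : rat) = ((- s)%:~R * (n%:R - 1) * (n%:R + s%:~R)) / n%:R ->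
  exists2 r : nat, n%:Z + s = r%:Z &
    [/\ (K + (n - 1) * l1 = r * K)%N, (n * l2 = r * K)%N & (r * V = n * K)%N].
Proof.
move=> s_neg ns_pos hV hK hl1 hl2.
have [r r_gt0 ns_r] : exists2 r : nat, (0 < r)%N & n%:Z + s = r%:Z.
  exists (absz (n%:Z + s)); [by rewrite absz_gt0 lt0r_neq0 | rewrite gez0_abs //; lia].
have n_gt0 : (0 < n)%N by lia.
have sR : (s%:~R : rat) = r%:R - n%:R.
  by rewrite (_ : s = r%:Z - n%:Z) ?rmorphB //; lia.
have nsR : n%:R + (r%:R - n%:R) = r%:R :> rat by rewrite addrC subrK.
rewrite rmorphN /= sR opprB in hV hK hl1 hl2; rewrite nsR in hV hl1 hl2.
exists r => //.
have nR : (n%:R : rat) != 0 by rewrite pnatr_eq0 -lt0n.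
have rR : (r%:R : rat) != 0 by rewrite pnatr_eq0 -lt0n.
split; apply/eqP; rewrite -(eqr_nat rat) ?natrD !natrM ?natrB // ?hK ?hl1 ?hl2 ?hV;
  apply/eqP; [ring | by field | by field].
Qed.

Theorem lemma4p1 (n : nat) (s : int) (T : finType) (adj : rel T)
    (V K l1 l2 m : nat) (P : T -> 'I_m) :
  s < 0 -> 0 < n%:Z + s ->
  (m%:R : rat) = ((- s)%:~R * (n%:R - 1)) / (n%:R + s%:~R) ->
  (V%:R : rat) = (n%:R * (- s)%:~R * (n%:R - 1)) / (n%:R + s%:~R) ->
  (K%:R : rat) = (- s)%:~R * (n%:R - 1) ->
  (l1%:R : rat) = (- s)%:~R * (n%:R + s%:~R - 1) ->
  (l2%:R : rat) = ((- s)%:~R * (n%:R - 1) * (n%:R + s%:~R)) / n%:R ->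
  is_ddg adj V K l1 l2 n P ->
  forall (i j : 'I_m) (x : T), P x = i ->
    (#|[set y | adj x y && (P y == j)]|%:Z = n%:Z + s).
Proof.
move=> s_neg ns_pos _ hV hK hl1 hl2 ddg i j x _.
have [r -> [common_in common_out rV_nK]] :=
  ddg_parameter_identities s_neg ns_pos hV hK hl1 hl2.
have common_sum := ddg_class_common_sum ddg.
case: ddg => adj_sym [_ [card_T [degK [_ [_ [class_n _]]]]]].
set C := canonical_class P j.
have card_C : #|C| = n by rewrite -(class_n j).
have sum_deg : (\sum_z deg_in adj C z = n * K)%N.
  by rewrite sum_deg_in // (eq_bigr (fun=> K)) ?sum_nat_const ?card_C.
have sum_sq : (\sum_z deg_in adj C z ^ 2 = n * (r * K))%N.
  rewrite sum_sq_deg_in // (eq_bigr (fun=> r * K)%N) ?sum_nat_const ?card_C //.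
  move=> y _; rewrite sum_adj_deg_in // common_sum.
  by case: eqP => _; [exact: common_in | exact: common_out].
have deg_x : deg_in adj C x = r.
  apply: constant_of_second_moment; rewrite sum_sq sum_deg card_T; nia.
by rewrite -deg_x; congr Posz; apply: eq_card => y; rewrite !inE andbC.
Qed.
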